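(* Let $R$ be a binary relation on $U$. Then $\wp(U)^{\vartriangle}$ is spatial and completely distributive if and only if for every $x\in U$, $R(x)$ is a union of sets $R(y)$ ($y\in U$) each of which is completely join-prime in $\wp(U)^{\vartriangle}$.
   Context: Let $U$ be a set and $R\subseteq U\times U$ a binary relation. For $x\in U$, $R(x)=\{y\in U\mid (x,y)\in R\}$ and $\breve R(x)=\{y\in U\mid (y,x)\in R\}$. For $X\subseteq U$, $X^{\vartriangle}=\{x\in U\mid \breve R(x)\cap X\neq\emptyset\}$ (so $\{x\}^{\vartriangle}=R(x)$), and $\wp(U)^{\vartriangle}=\{X^{\vartriangle}\mid X\subseteq U\}$, a complete lattice under $\subseteq$ in which joins are unions. An element $p$ of a complete lattice $L$ is completely join-prime if $p\le\bigvee Y$ implies $p\le y$ for some $y\in Y$; it is completely join-irreducible if $p=\bigvee Y$ implies $p\in Y$. $L$ is spatial if each element is the join of the completely join-irreducible elements below it, and completely distributive if $\bigwedge_{i\in I}\bigvee_{j\in J}x_{i,j}=\bigvee_{f\colon I\to J}\bigwedge_{i\in I}x_{i,f(i)}$ for all doubly indexed families. *)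

From mathcomp Require Import all_boot.
From mathcomp Require Export boolp classical_sets.
Set Implicit Arguments. Unset Strict Implicit. Unset Printing Implicit Defensive.
Local Open Scope classical_set_scope.

Section Defs.
Variable U : Type.

Definition Rimg (R : U -> U -> Prop) (x : U) : set U := [set y | R x y].

(* X^△ = { x | R̆(x) ∩ X ≠ ∅ } where R̆(x) = { y | (y,x) ∈ R } *)
Definition tri (R : U -> U -> Prop) (X : set U) : set U :=
  [set x | exists y, X y /\ R y x].

Definition Ltri (R : U -> U -> Prop) : set (set U) := range (tri R).

Definition is_lub (L : set (set U)) (Y : set (set U)) (z : set U) : Prop :=
  L z /\ (forall y, Y y -> y `<=` z) /\
  (forall w, L w -> (forall y, Y y -> y `<=` w) -> z `<=` w).

Definition is_glb (L : set (set U)) (Y : set (set U)) (z : set U) : Prop :=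
  L z /\ (forall y, Y y -> z `<=` y) /\
  (forall w, L w -> (forall y, Y y -> w `<=` y) -> w `<=` z).

Definition complete_lattice (L : set (set U)) : Prop :=
  forall Y, Y `<=` L -> (exists z, is_lub L Y z) /\ (exists z, is_glb L Y z).

Definition comp_join_prime (L : set (set U)) (p : set U) : Prop :=
  L p /\ forall Y z, Y `<=` L -> is_lub L Y z -> p `<=` z ->
    exists2 y, Y y & p `<=` y.

Definition comp_join_irred (L : set (set U)) (p : set U) : Prop :=
  L p /\ forall Y, Y `<=` L -> is_lub L Y p -> Y p.

Definition spatial (L : set (set U)) : Prop :=
  forall x, L x -> is_lub L [set p | comp_join_irred L p /\ p `<=` x] x.

(* ⋀_i ⋁_j x i j = ⋁_{f : I -> J} ⋀_i x i (f i), stated relationally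
   (joins/meets taken in L). *)
Definition comp_distributive (L : set (set U)) : Prop :=
  forall (I J : Type) (x : I -> J -> set U), (forall i j, L (x i j)) ->
  forall (s : I -> set U) (t : (I -> J) -> set U) (a b : set U),
    (forall i, is_lub L (range (x i)) (s i)) ->
    is_glb L (range s) a ->
    (forall f, is_glb L (range (fun i => x i (f i))) (t f)) ->
    is_lub L (range t) b ->
    a = b.

End Defs.

From mathcomp Require Import all_boot boolp classical_sets.
Set Implicit Arguments. Unset Strict Implicit. Unset Printing Implicit Defensive.
Local Open Scope classical_set_scope.

(* The elements of ℘(U)^△ are exactly the unions of sets R(y); joins are unions
   and the meet of a family is the largest union of sets R(y) inside its
   intersection.  If every R(x) is a union of completely join-prime R(y), then
   every element is a union of completely join-primes, which gives spatiality
   and, choosing for each index i a j with R(y) ≤ x i j, complete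
   distributivity.  Conversely a completely join-irreducible element is the
   union of the R(y) below it, hence equal to one of them; spatiality writes
   R(x) as a union of these, and complete distributivity makes them
   completely join-prime, since p ≤ ⋁Y gives p = p ∧ ⋁Y = ⋁ (p ∧ y). *)

Section LatticeOfSets.
Variables (U : Type) (L : set (set U)).

Lemma is_lub_unique Y z z' : is_lub L Y z -> is_lub L Y z' -> z = z'.
Proof.
move=> [Lz [ubz leastz]] [Lz' [ubz' leastz']].
by apply/seteqP; split; [exact: leastz | exact: leastz'].
Qed.

Lemma comp_join_prime_irred p : comp_join_prime L p -> comp_join_irred L p.
Proof.
move=> [Lp prime]; split => // Y YL lubp.
have [y Yy py] := prime Y p YL lubp (@subset_refl _ p).
suff -> : p = y by [].
by apply/seteqP; split => //; case: lubp => _ [ub _]; exact: ub.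
Qed.

Definition prime_covered :=
  forall z, L z -> forall u, z u -> exists p, [/\ comp_join_prime L p, p `<=` z & p u].

Lemma spatial_prime_covered : prime_covered -> spatial L.
Proof.
move=> cover z Lz; split => //; split; first by move=> p [].
move=> w _ ub u zu; have [p [cjp pz pu]] := cover z Lz u zu.
by apply: (ub p) => //; split => //; exact: comp_join_prime_irred.
Qed.

Section MeetOfJoins.
Variables (I J : Type) (x : I -> J -> set U) (s : I -> set U).
Variables (t : (I -> J) -> set U) (a b : set U).
Hypotheses (xL : forall i j, L (x i j)).
Hypotheses (lub_s : forall i, is_lub L (range (x i)) (s i)).
Hypotheses (glb_a : is_glb L (range s) a).
Hypotheses (glb_t : forall f, is_glb L (range (fun i => x i (f i))) (t f)).
Hypotheses (lub_b : is_lub L (range t) b).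

Lemma join_of_meets_sub_meet_of_joins : b `<=` a.
Proof.
case: lub_b => _ [_ leastb]; apply: leastb; first by case: glb_a.
move=> _ [f _ <-]; case: glb_a => _ [_ greatesta].
apply: greatesta; first by case: (glb_t f).
move=> _ [i _ <-] u tfu.
case: (lub_s i) => _ [ub _]; apply: (ub (x i (f i))); first by exists (f i).
by case: (glb_t f) => _ [lb _]; apply: (lb (x i (f i))) => //; exists i.
Qed.

Lemma comp_join_prime_sub_join_of_meets p :
  comp_join_prime L p -> p `<=` a -> p `<=` b.
Proof.
move=> [Lp prime] pa.
have /choice[f pf] : forall i, exists j, p `<=` x i j.
  move=> i.
  have a_si : a `<=` s i by case: glb_a => _ [lb _]; apply: lb; exists i.
  have xiL : range (x i) `<=` L by move=> _ [j _ <-].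
  have [_ [j _ <-] pxij] := prime _ _ xiL (lub_s i) (subset_trans pa a_si).
  by exists j.
have ptf : p `<=` t f.
  by case: (glb_t f) => _ [_ greatest]; apply: greatest => // _ [i _ <-].
by case: lub_b => _ [ub _]; apply: subset_trans ptf _; apply: ub; exists f.
Qed.

End MeetOfJoins.

Lemma comp_distributive_prime_covered : prime_covered -> comp_distributive L.
Proof.
move=> cover I J x xL s t a b lub_s glb_a glb_t lub_b.
apply/seteqP; split; last exact: join_of_meets_sub_meet_of_joins lub_s glb_a glb_t lub_b.
move=> u au; have [p [cjp pa pu]] := cover a (proj1 glb_a) u au.
exact: (comp_join_prime_sub_join_of_meets xL lub_s glb_a glb_t lub_b cjp pa pu).
Qed.

End LatticeOfSets.

Section TriLattice.
Variables (U : Type) (R : U -> U -> Prop).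
Local Notation L := (Ltri R).

Definition tri_interior (z : set U) : set U := tri R [set y | Rimg R y `<=` z].

Lemma Ltri_interior z : L (tri_interior z).
Proof. by exists [set y | Rimg R y `<=` z]. Qed.

Lemma tri_interior_sub z : tri_interior z `<=` z.
Proof. by move=> u [y [yz Ryu]]; exact: yz. Qed.

Lemma tri_interior_max w z : L w -> w `<=` z -> w `<=` tri_interior z.
Proof.
move=> [X _ <-] wz u [y [Xy Ryu]]; exists y; split => // v Ryv.
by apply: wz; exists y.
Qed.

Lemma tri_interior_id z : L z -> tri_interior z = z.
Proof.
move=> Lz; apply/seteqP; split; first exact: tri_interior_sub.
exact: tri_interior_max.
Qed.

Lemma Ltri_cover z u : L z -> z u -> exists y, Rimg R y `<=` z /\ R y u.
Proof. by move=> Lz; rewrite -{1}(tri_interior_id Lz) => -[y]; exists y. Qed.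

Lemma Rimg_Ltri y : L (Rimg R y).
Proof.
exists [set y] => //; apply/seteqP; split => u; first by case=> _ [-> Ryu].
by move=> Ryu; exists y.
Qed.

Lemma Ltri_bigcup Y : Y `<=` L -> L (\bigcup_(z in Y) z).
Proof.
move=> YL; suff <- : tri_interior (\bigcup_(z in Y) z) = \bigcup_(z in Y) z.
  exact: Ltri_interior.
apply/seteqP; split; first exact: tri_interior_sub.
move=> u [z Yz zu]; apply: tri_interior_max (YL z Yz) _ u zu.
by move=> v zv; exists z.
Qed.

Lemma is_lub_bigcup Y : Y `<=` L -> is_lub L Y (\bigcup_(z in Y) z).
Proof.
move=> YL; split; first exact: Ltri_bigcup.
split; first by move=> y Yy u yu; exists y.
by move=> w _ ub u [z Yz zu]; exact: ub z Yz u zu.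
Qed.

Lemma is_lubE Y z : Y `<=` L -> is_lub L Y z -> z = \bigcup_(w in Y) w.
Proof. by move=> YL /is_lub_unique; apply; exact: is_lub_bigcup. Qed.

Lemma is_glb_tri_interior F : is_glb L F (tri_interior (\bigcap_(z in F) z)).
Proof.
split; first exact: Ltri_interior.
split; first by move=> z Fz u /tri_interior_sub; apply.
by move=> w Lw lb; apply: tri_interior_max => // u wu z Fz; exact: lb.
Qed.

Lemma comp_join_irred_Rimg p : comp_join_irred L p -> exists y, p = Rimg R y.
Proof.
move=> [Lp irr].
pose Y := Rimg R @` [set y | Rimg R y `<=` p].
have YL : Y `<=` L by move=> _ [y _ <-]; exact: Rimg_Ltri.
have pE : p = \bigcup_(w in Y) w.
  apply/seteqP; split; last by move=> u [_ [y yp <-] Ryu]; exact: yp.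
  by move=> u pu; have [y [yp Ryu]] := Ltri_cover Lp pu; exists (Rimg R y) => //; exists y.
have [y _ yp] : Y p by apply: irr => //; rewrite [X in is_lub _ _ X]pE; exact: is_lub_bigcup.
by exists y.
Qed.

Lemma comp_distributive_meet_bigcup p Y : comp_distributive L -> L p -> Y `<=` L ->
  tri_interior (p `&` \bigcup_(y in Y) y) = \bigcup_(y in Y) tri_interior (p `&` y).
Proof.
move=> CD Lp YL.
(* Complete distributivity for the two rows p, p, ... and (y)_(y in Y). *)
pose x (i : bool) (j : {y : set U | Y y}) := if i then p else proj1_sig j.
have xL i j : L (x i j) by case: i => //=; exact: YL (proj2_sig j).
have xiL i : range (x i) `<=` L by move=> _ [j _ <-].
pose s i := \bigcup_(w in range (x i)) w.
pose t f := tri_interior (\bigcap_(w in range (fun i => x i (f i))) w).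
have tL : range t `<=` L by move=> _ [f _ <-]; exact: Ltri_interior.
have CDxst : tri_interior (\bigcap_(w in range s) w) = \bigcup_(w in range t) w.
  exact: (CD _ _ x xL s t _ _ (fun i => is_lub_bigcup (xiL i))
    (is_glb_tri_interior _) (fun f => is_glb_tri_interior _) (is_lub_bigcup tL)).
have capS : \bigcap_(w in range s) w = p `&` \bigcup_(y in Y) y.
  apply/seteqP; split => [u su | u [pu [y Yy yu]] _ [[] _ <-]].
  - have [_ [j _ <-] pu] := su (s true) (ex_intro2 _ _ true I erefl).
    have [_ [j' _ <-] yu] := su (s false) (ex_intro2 _ _ false I erefl).
    by split => //; exists (proj1_sig j') => //; exact: proj2_sig j'.
  - by exists p => //; exists (exist _ y Yy).
  - by exists y => //; exists (exist _ y Yy).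
have tE f : t f = tri_interior (p `&` proj1_sig (f false)).
  congr tri_interior; apply/seteqP; split => [u xu | u [pu yu] _ [[] _ <-] //].
  by split; [apply: (xu p); exists true | apply: xu; exists false].
rewrite -capS CDxst; apply/seteqP; split => [u [_ [f _ <-]] | u [y Yy]].
- by rewrite tE => tu; exists (proj1_sig (f false)) => //; exact: proj2_sig (f false).
- move=> tu; exists (t (fun=> exist _ y Yy)); first by exists (fun=> exist _ y Yy).
  by rewrite tE.
Qed.

Lemma comp_join_irred_prime p :
  comp_distributive L -> comp_join_irred L p -> comp_join_prime L p.
Proof.
move=> CD [Lp irr]; split => // Y z YL lubz pz.
rewrite (is_lubE YL lubz) in pz.
pose Y' := (fun y => tri_interior (p `&` y)) @` Y.
have Y'L : Y' `<=` L by move=> _ [y _ <-]; exact: Ltri_interior.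
have pE : p = \bigcup_(w in Y') w.
  by rewrite bigcup_image -comp_distributive_meet_bigcup // setIidl // tri_interior_id.
have [y Yy yp] : Y' p by apply: irr => //; rewrite [X in is_lub _ _ X]pE; exact: is_lub_bigcup.
by exists y => //; rewrite -yp => v /tri_interior_sub[].
Qed.

Lemma Ltri_prime_covered :
  (forall x, exists S, Rimg R x = \bigcup_(y in S) Rimg R y /\
     (forall y, S y -> comp_join_prime L (Rimg R y))) ->
  prime_covered L.
Proof.
move=> basis z Lz u zu.
have [x [xz Rxu]] := Ltri_cover Lz zu.
have [S [xE cjpS]] := basis x.
have : Rimg R x u := Rxu; rewrite xE => -[y Sy Ryu].
exists (Rimg R y); split => //; first exact: cjpS.
by apply: subset_trans xz; rewrite xE => v Ryv; exists y.
Qed.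

End TriLattice.

Theorem mainTheorem17 (U : Type) (R : U -> U -> Prop) :
  (spatial (Ltri R) /\ comp_distributive (Ltri R)) <->
  (forall x : U, exists S : set U,
      Rimg R x = \bigcup_(y in S) Rimg R y /\
      (forall y, S y -> comp_join_prime (Ltri R) (Rimg R y))).
Proof.
split; last first.
  move=> /Ltri_prime_covered cover.
  by split; [exact: spatial_prime_covered | exact: comp_distributive_prime_covered].
move=> [spat CD] x.
exists [set y | comp_join_prime (Ltri R) (Rimg R y) /\ Rimg R y `<=` Rimg R x].
split; last by move=> y [].
apply/seteqP; split => [u Rxu | u [y [_ yx] Ryu]]; last exact: yx.
have cjiL : [set p | comp_join_irred (Ltri R) p /\ p `<=` Rimg R x] `<=` Ltri R.
  by move=> p [[]].
rewrite (is_lubE cjiL (spat _ (Rimg_Ltri R x))) in Rxu.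
case: Rxu => p [cjip px] pu.
have [y py] := comp_join_irred_Rimg cjip; subst p.
by exists y => //; split => //; exact: comp_join_irred_prime.
Qed.
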